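(* Let $q$ be an odd prime power and let $f(X)\in\mathbb{F}_q[X]$ permute $\mathbb{F}_q$. Then there is no $a\in\mathbb{F}_q$ for which $g_a(X):=\frac{f(X+a)-f(a)}{X}$ permutes $\mathbb{F}_q$. *)

From HB Require Import structures.
From mathcomp Require Import all_boot all_order all_algebra all_field.
Set Implicit Arguments. Unset Strict Implicit. Unset Printing Implicit Defensive.
Import GRing.Theory.
Local Open Scope ring_scope.

Definition permutes (F : finFieldType) (p : {poly F}) : Prop :=
  bijective (fun x : F => p.[x]).

(* g_a(X) = (f(X + a) - f(a)) / X ; the numerator vanishes at 0, so this
   polynomial division is exact. *)
Definition g_poly (F : finFieldType) (f : {poly F}) (a : F) : {poly F} :=
  (f \Po ('X + a%:P) - (f.[a])%:P) %/ 'X.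

(* With s(x) := f(x + a) - f(a) = x g_a(x), both s and g_a are permutations
   of F_q fixing 0 (a root of g_a is a root of s).  Multiplying over the
   nonzero x and using Wilson's theorem in F_q gives
   -1 = (-1) * (-1) = 1, impossible in odd characteristic. *)
From HB Require Import structures.
From mathcomp Require Import all_boot all_order all_algebra all_field.
From mathcomp Require Import fingroup cyclic.
Import GRing.Theory.
Local Open Scope ring_scope.

Lemma mulrn_card (V : finZmodType) (x : V) : x *+ #|V| = 0.
Proof. by rewrite -FinRing.zmodXgE -cardsT expg_cardG ?inE. Qed.

Lemma two_neq0_odd_card (R : finNzRingType) : odd #|R| -> 2 != 0 :> R.
Proof.
move=> oddR; apply/negP => /eqP two0.
have := @mulrn_card R 1.
rewrite -[#|R|]odd_double_half oddR mulrnDr -mul2n mulrnA two0 mul0rn addr0.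
by move/eqP; rewrite oner_eq0.
Qed.

Lemma finField_Wilson (F : finFieldType) : \prod_(x : F | x != 0) x = -1.
Proof.
have q_gt1 := finNzRing_gt1 F; have q_gt0 := ltnW q_gt1.
have genPoly : 'X * ('X^(#|F|.-1) - 1) = 'X * \prod_(x : F | x != 0) ('X - x%:P).
  by rewrite mulrBr mulr1 -exprS prednK // finField_genPoly (bigD1 0) //= subr0.
have := congr1 (horner^~ 0) (mulfI (negbT (polyX_eq0 F)) genPoly).
rewrite /= horner_prod hornerD hornerN hornerXn hornerC expr0n -subn1 subn_eq0.
rewrite leqNgt q_gt1 sub0r.
under eq_bigr do rewrite hornerD hornerN hornerX hornerC add0r.
rewrite prodrN -[#|_|]/#|predC1 0| cardC1 => /eqP.
suff -> : (-1) ^+ #|F|.-1 = 1 :> F by rewrite mul1r eq_sym => /eqP.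
apply: oppr_inj; rewrite -[LHS]mulN1r -exprS prednK //.
exact: expf_card.
Qed.

Lemma prod_neq_perm_fix {T : finType} {R : comPzSemiRingType} {t0 : T}
    {s : T -> T} (F : T -> R) :
  injective s -> s t0 = t0 ->
  \prod_(x | x != t0) F (s x) = \prod_(x | x != t0) F x.
Proof.
move=> s_inj s_t0; rewrite [RHS](reindex_inj s_inj) /=.
by apply: eq_bigl => x; rewrite -{2}s_t0 (inj_eq s_inj).
Qed.

Section DifferenceQuotient.

Context {F : finFieldType} {f : {poly F}} {a : F}.

Lemma horner_g_polyM (x : F) : (g_poly f a).[x] * x = f.[x + a] - f.[a].
Proof.
have X_dvd : 'X %| f \Po ('X + a%:P) - f.[a]%:P.
  rewrite -[X in X %| _]subr0 -polyC0 dvdp_XsubCl /root.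
  by rewrite !hornerE horner_comp !hornerE subrr.
have := congr1 (horner^~ x) (divpK X_dvd).
by rewrite /= hornerMX => ->; rewrite !hornerE horner_comp !hornerE.
Qed.

Lemma g_poly_root_eq0 {x : F} :
  injective (horner f) -> (g_poly f a).[x] = 0 -> x = 0.
Proof.
move=> f_inj gx0; have := horner_g_polyM x.
rewrite gx0 mul0r => /esym/eqP; rewrite subr_eq0 => /eqP/f_inj.
by move/(canRL (addrK a)); rewrite subrr.
Qed.

End DifferenceQuotient.

Theorem proposition6p1 (F : finFieldType) (hodd : odd #|F|) (f : {poly F}) :
  permutes f -> ~ (exists a : F, permutes (g_poly f a)).
Proof.
move=> f_perm [a [g_inv g_invK gK]].
set g := g_poly f a in g_invK gK.
have f_inj : injective (horner f) := bij_inj f_perm.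
have g_inj : injective (horner g) := can_inj g_invK.
have s_inj : injective (fun x => f.[x + a] - f.[a]).
  by move=> x y /addIr/f_inj/addIr.
have g_inv0 : g_inv 0 = 0 := g_poly_root_eq0 f_inj (gK 0).
have g0 : g.[0] = 0 by rewrite -{1}g_inv0 gK.
have s0 : f.[0 + a] - f.[a] = 0 by rewrite add0r subrr.
have := prod_neq_perm_fix id s_inj s0.
under eq_bigr do rewrite -horner_g_polyM.
rewrite big_split /= (prod_neq_perm_fix id g_inj g0) finField_Wilson.
rewrite mulrNN mulr1 => /eqP; rewrite -subr_eq0 opprK.
exact/negP/two_neq0_odd_card.
Qed.
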